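(* Let $T=(V,E)$ be a rooted phylogenetic tree on a finite set $\mathcal{X}$ of taxa, let $\mathcal{G}$ be a finite set of genes, let $G:\mathcal{X}\to 2^{\mathcal{G}}$ be a genome assignment, and let $k$ be a positive integer. Then: (i) $\ell(T,G,k)\ge \sqrt{\tfrac{2}{3}\,|\{v\in V : n(v)>k\}|}$; (ii) $\ell(T,G,k)\le \left\lceil \frac{|\mathcal{G}|-k}{k}\right\rceil\cdot(|\mathcal{X}|+1)$.
   Context: A digraph is rooted if it has a vertex $\rho$ of indegree zero such that every vertex is reachable from $\rho$ by a directed path. A phylogenetic tree on $\mathcal{X}$ is a rooted tree (arcs directed away from the root) whose root has degree at least two, all other internal vertices have degree at least three, and whose leaf set is $\mathcal{X}$. A phylogenetic network on $\mathcal{X}$ is a rooted acyclic digraph whose root has outdegree at least two, in which every vertex $v$ of outdegree $1$ has indegree at least $2$, and whose set of outdegree-zero vertices (leaves) is $\mathcal{X}$. A genome assignment is any map $G:\mathcal{X}\to 2^{\mathcal{G}}$. For a phylogenetic network $N=(V,A)$ on $\mathcal{X}$ and positive integer $k$, a $(G,k)$-gene labelling of $N$ is a map $F:V\to 2^{\mathcal{G}}$ such that (I) $F(x)=G(x)$ for all $x\in\mathcal{X}$; (II) $|F(v)|\le k$ for all $v\in V$; (III) for each $g\in\mathcal{G}$, the sub-digraph of $N$ induced by $\{v\in V: g\in F(v)\}$ is rooted. A network $N$ is obtained from $T$ by adding $h$ arcs if $N$ has a subgraph $T'$ that is a subdivision of $T$ (obtained by replacing arcs by directed paths) and exactly $h$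 arcs of $N$ are not arcs of $T'$. $\ell(T,G,k)$ denotes the minimum $h$ such that some phylogenetic network obtained from $T$ by adding $h$ arcs admits a $(G,k)$-gene labelling. For a vertex $v$ of $T$, $n(v)$ is the number of genes $g\in\mathcal{G}$ for which there exist leaves $x_1,x_2\in\mathcal{X}$ with $g\in G(x_1)\cap G(x_2)$ and whose most recent common ancestor in $T$ is $v$. *)

From mathcomp Require Import all_boot.
Set Implicit Arguments. Unset Strict Implicit. Unset Printing Implicit Defensive.

(* Finite simple digraphs are given by a vertex finType V and an arc relation
   e : rel V (arc u -> w iff e u w). *)

Definition outdeg (V : finType) (e : rel V) (v : V) : nat := #|[set w | e v w]|.
Definition indeg (V : finType) (e : rel V) (v : V) : nat := #|[set u | e u v]|.

Definition induced (V : finType) (e : rel V) (S : {set V}) : rel V :=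
  [rel u w | [&& e u w, u \in S & w \in S]].

Definition rooted_on (V : finType) (e : rel V) (S : {set V}) : Prop :=
  exists2 rho, rho \in S &
    (indeg (induced e S) rho = 0 /\ forall v, v \in S -> connect (induced e S) rho v).

Definition is_root (V : finType) (e : rel V) (rho : V) : Prop :=
  indeg e rho = 0 /\ forall v, connect e rho v.

Definition acyclic (V : finType) (e : rel V) : Prop :=
  forall u w, e u w -> ~~ connect e w u.

(* Rooted tree (arcs directed away from the root rho), i.e. every non-root
   vertex has exactly one parent, root degree >= 2, non-root internal vertices
   degree >= 3, and leaf set (outdegree-0 vertices) bijectively labelled by X
   via lT. *)
Definition phylo_tree (X VT : finType) (eT : rel VT) (lT : X -> VT) : Prop :=
  exists rho, [/\ is_root eT rho,
    forall v, v != rho -> indeg eT v = 1,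
    2 <= indeg eT rho + outdeg eT rho,
    forall v, v != rho -> 0 < outdeg eT v -> 3 <= indeg eT v + outdeg eT v &
    injective lT /\
    forall v, (outdeg eT v == 0) = (v \in codom lT)].

Definition phylo_network (X VN : finType) (eN : rel VN) (lN : X -> VN) : Prop :=
  [/\ (exists2 rho, is_root eN rho & 2 <= outdeg eN rho),
    acyclic eN,
    forall v, outdeg eN v = 1 -> 2 <= indeg eN v &
    injective lN /\
    forall v, (outdeg eN v == 0) = (v \in codom lN)].

(* arcs (as pairs) of the directed path a :: p ++ [:: b] *)
Definition path_arcs (V : Type) (a : V) (p : seq V) (b : V) : seq (V * V) :=
  zip (a :: p) (rcons p b).

(* N = (VN,eN,lN) is obtained from T = (VT,eT,lT) by adding h arcs:
   N has a subgraph T' (arc set A') which is a subdivision of T, i.e. there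
   is an injective vertex embedding phi : VT -> VN respecting leaf labels, and
   each arc (u,w) of T is replaced by a directed path
   phi u, sub u w, phi w of N using arcs of A' only, where the internal vertices
   (sub u w) are pairwise distinct, are not images of phi, and are not shared
   between the paths of different arcs; A' consists exactly of the arcs of
   these paths; and exactly h arcs of N are not arcs of T'. *)
Definition obtained_by_adding (X VT VN : finType) (eT : rel VT) (lT : X -> VT)
    (eN : rel VN) (lN : X -> VN) (h : nat) : Prop :=
  exists (A' : {set VN * VN}) (phi : VT -> VN) (sub : VT -> VT -> seq VN),
  [/\ injective phi /\ (forall x, phi (lT x) = lN x),
      forall a, a \in A' -> eN a.1 a.2,
      forall u w, eT u w ->
        [/\ all (fun a => a \in A') (path_arcs (phi u) (sub u w) (phi w)),
            uniq (sub u w) &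
            forall z, z \in sub u w -> z \notin codom phi],
      forall u w u' w', eT u w -> eT u' w' -> (u, w) != (u', w') ->
        forall z, z \in sub u w -> z \notin sub u' w' &
      (forall a, a \in A' -> exists u w, eT u w /\ a \in path_arcs (phi u) (sub u w) (phi w)) /\
      #|[set a : VN * VN | eN a.1 a.2 & a \notin A']| = h].

Definition gene_labelling (X VN Gn : finType) (eN : rel VN) (lN : X -> VN)
    (G : X -> {set Gn}) (k : nat) (F : VN -> {set Gn}) : Prop :=
  [/\ forall x, F (lN x) = G x,
      forall v, #|F v| <= k &
      forall g, rooted_on eN [set v | g \in F v]].

(* h is attainable: some phylogenetic network obtained from T by adding h arcs
   admits a (G,k)-gene labelling.  ell(T,G,k) is the minimum such h. *)
Definition ell_attainable (X VT Gn : finType) (eT : rel VT) (lT : X -> VT)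
    (G : X -> {set Gn}) (k h : nat) : Prop :=
  exists (VN : finType) (eN : rel VN) (lN : X -> VN),
    [/\ phylo_network eN lN, obtained_by_adding eT lT eN lN h &
        exists F : VN -> {set Gn}, gene_labelling eN lN G k F].

Definition is_mrca (VT : finType) (eT : rel VT) (v a b : VT) : bool :=
  [&& connect eT v a, connect eT v b &
      [forall w, (connect eT w a && connect eT w b) ==> connect eT w v]].

Definition n_of (X VT Gn : finType) (eT : rel VT) (lT : X -> VT)
    (G : X -> {set Gn}) (v : VT) : nat :=
  #|[set g : Gn | [exists x1, exists x2,
       [&& x1 != x2, g \in G x1, g \in G x2 & is_mrca eT v (lT x1) (lT x2)]]]|.

Definition ceil_div (a b : nat) : nat := (a + b.-1) %/ b.

(* Let N be obtained from T by adding a set of h arcs and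
   carry a (G,k)-labelling F.  The subdivided copy of T inside N splits N into
   regions, one per subtree of T.  If n(v) > k, some gene g shared by two leaves
   whose mrca is v is missing from F(phi v); the sub-network carrying g is
   rooted, so it reaches both leaves without passing through phi v, and hence
   must enter (or leave) the regions of two distinct children of v through
   added arcs.  Recording these arcs gives v a "code" -- an unordered pair or
   an ordered pair of added arcs -- and a code determines v, because the
   branching vertex of two vertices of a tree is unique.  Hence
   #{v | n(v) > k} <= C(h,2) + h^2 <= 3/2 h^2.

   Adding m = ceil((|G|-k)/k) new vertices, each a child of
   the root and a parent of every leaf, costs m (|X| + 1) arcs; the genes are
   cut into m + 1 blocks of at most k, block 0 labelling T and block j+1 the
   j-th new vertex. *)
From mathcomp Require Import all_boot.
Set Implicit Arguments. Unset Strict Implicit. Unset Printing Implicit Defensive.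

Section Paths.
Variables (T : finType) (e : rel T).

Lemma connect_last_arc a b :
  connect e a b -> a != b -> exists2 c, connect e a c & e c b.
Proof.
move=> /connectP [s Hs ->]; elim/last_ind: s Hs => [|s z _] /=; first by rewrite eqxx.
rewrite rcons_path last_rcons => /andP [Hs Hz] _.
by exists (last a s) => //; apply/connectP; exists s.
Qed.

Lemma connect_first_arc a b :
  connect e a b -> a != b -> exists2 c, e a c & connect e c b.
Proof.
move=> /connectP [[|c s] Hs ->] /=; first by rewrite eqxx.
by case/andP: Hs => Hc Hs _; exists c => //; apply/connectP; exists s.
Qed.

Lemma connect_enter (P : pred T) a b :
  connect e a b -> ~~ P a -> P b ->
  exists a', exists b', [/\ e a' b', ~~ P a', P b' & connect e a a'].
Proof.
move=> /connectP [s Hs ->]; elim: s a Hs => [|y s IH] a /=; first by move=> _ /negP.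
case/andP=> Hy Hs Pa Pl; case Py: (P y); first by exists a, y.
have [a' [b' [H1 H2 H3 H4]]] := IH y Hs (negbT Py) Pl.
by exists a', b'; split => //; apply: connect_trans (connect1 Hy) H4.
Qed.

Lemma connect_backward_closed (P : pred T) a b :
  (forall u w, e u w -> P w -> P u) -> connect e a b -> P b -> P a.
Proof.
move=> Hcl /connectP [s Hs ->]; elim: s a Hs => [|y s IH] a //= /andP [Hy Hs] Hl.
exact: Hcl Hy (IH _ Hs Hl).
Qed.

Definition ancestors_count (v : T) : nat := #|[set u | connect e u v]|.

Lemma ancestors_count_lt a b :
  connect e a b -> ~~ connect e b a -> ancestors_count a < ancestors_count b.
Proof.
move=> Cab NCba; apply: proper_card; apply/properP; split.
  by apply/subsetP => u; rewrite !inE => Cua; apply: connect_trans Cua Cab.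
by exists b; rewrite !inE ?connect0.
Qed.

Lemma rank_acyclic (r : T -> nat) : (forall u w, e u w -> r u < r w) -> acyclic e.
Proof.
move=> Hr u w Huw; apply/negP => /connectP [s Hs Eu].
suff : r w <= r (last w s) by rewrite -Eu leqNgt Hr.
elim: s w Hs {Huw Eu} => [|y s IH] w //= /andP [Hy Hs].
exact: leq_trans (ltnW (Hr _ _ Hy)) (IH _ Hs).
Qed.

End Paths.

Lemma mem_zip_pair (S T : eqType) (s : seq S) (t : seq T) a b :
  (a, b) \in zip s t -> a \in s /\ b \in t.
Proof.
elim: s t => [|x s IH] [|y t] //=; rewrite in_cons => /orP [/eqP [-> ->] | /IH [H1 H2]].
  by rewrite !inE !eqxx.
by rewrite !inE H1 H2 !orbT.
Qed.

Lemma outdeg_gt0 (V : finType) (e : rel V) v w : e v w -> 0 < outdeg e v.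
Proof. by move=> H; rewrite /outdeg card_gt0; apply/set0Pn; exists w; rewrite inE. Qed.

Lemma indeg_eq0 (V : finType) (e : rel V) v : (indeg e v = 0) <-> (forall u, ~~ e u v).
Proof.
rewrite /indeg; split=> [/eqP | H].
  by rewrite cards_eq0 => /eqP E u; apply/negP => Hu; move: (in_set0 u); rewrite -E inE Hu.
by apply/eqP; rewrite cards_eq0; apply/eqP/setP => u; rewrite inE in_set0 (negbTE (H u)).
Qed.

Definition rooted_tree (V : finType) (e : rel V) (rho : V) : Prop :=
  [/\ indeg e rho = 0, forall v, connect e rho v & forall v, v != rho -> indeg e v = 1].

Section RootedTree.
Variables (VT : finType) (eT : rel VT) (rho : VT).
Hypothesis tree : rooted_tree eT rho.

Lemma root_no_parent u : ~~ eT u rho.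
Proof. by case: tree => /indeg_eq0. Qed.

Lemma parent_unique u u' w : eT u w -> eT u' w -> u = u'.
Proof.
move=> Hu Hu'; have Nw : w != rho.
  by apply: contraTneq Hu => ->; exact: root_no_parent.
case: tree => _ _ /(_ w Nw) H1.
have /card_le1_eqP : #|[set u | eT u w]| <= 1 by rewrite /indeg in H1; rewrite H1.
by apply; rewrite inE.
Qed.

Lemma connect_parent a p q : connect eT a p -> a != p -> eT q p -> connect eT a q.
Proof.
move=> Hc Hne Hq; have [q' Hq' Hq'p] := connect_last_arc Hc Hne.
by rewrite (parent_unique Hq Hq'p).
Qed.

(* A cycle through an arc (u, w) would make w an ancestor of the root. *)
Lemma tree_acyclic : acyclic eT.
Proof.
move=> u w Huw; apply/negP => Hwu.
have Hcl : forall p y, eT p y -> connect eT w y -> connect eT w p.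
  move=> p y Hp Hy; case: (eqVneq w y) => [Ey|Ney]; last exact: connect_parent Hy Ney Hp.
  by rewrite -Ey in Hp; rewrite (parent_unique Hp Huw).
have Hr : connect eT w rho.
  by case: tree => _ Hrv _; apply: (connect_backward_closed Hcl (Hrv w)).
have Nw : w != rho by apply: contraTneq Huw => ->; exact: root_no_parent.
have [q _ Hq] := connect_last_arc Hr Nw.
by move: Hq; rewrite (negbTE (root_no_parent q)).
Qed.

Lemma ancestors_comparable a b p :
  connect eT a p -> connect eT b p -> connect eT a b || connect eT b a.
Proof.
move=> Hap /connectP [s Hs Ep]; subst p.
elim/last_ind: s Hap Hs => [|s z IH] /=; first by move=> ->.
rewrite last_rcons rcons_path => Haz /andP [Hs Hz].
case: (eqVneq a z) => [->|Nea]; last exact: IH (connect_parent Haz Nea Hz) Hs.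
by apply/orP; right; apply/connectP; exists (rcons s z); rewrite ?rcons_path ?Hs ?Hz ?last_rcons.
Qed.

Lemma sibling_connect_eq v c d : eT v c -> eT v d -> connect eT c d -> c = d.
Proof.
move=> Hc Hd Hcd; apply/eqP; apply/negP => /negP Ne.
by move: (tree_acyclic Hc); rewrite (connect_parent Hcd Ne Hd).
Qed.

Lemma siblings_disjoint v c d w :
  eT v c -> eT v d -> c != d -> connect eT c w -> ~~ connect eT d w.
Proof.
move=> Hc Hd N Cc; apply/negP => Cd.
case/orP: (ancestors_comparable Cc Cd) => C.
  by move: N; rewrite (sibling_connect_eq Hc Hd C) eqxx.
by move: N; rewrite (sibling_connect_eq Hd Hc C) eqxx.
Qed.

Definition branches_to (v w1 w2 : VT) : Prop :=
  exists d1, exists d2,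
    [/\ eT v d1, eT v d2, d1 != d2, connect eT d1 w1 & connect eT d2 w2].

Lemma branches_to_unique v v' w1 w2 :
  branches_to v w1 w2 -> branches_to v' w1 w2 -> v = v'.
Proof.
suff below : forall v v', branches_to v w1 w2 -> branches_to v' w1 w2 ->
    connect eT v v' -> v = v'.
  move=> B B'; have [d1 [_ [H1 _ _ C1 _]]] := B; have [d1' [_ [H1' _ _ C1' _]]] := B'.
  case/orP: (ancestors_comparable (connect_trans (connect1 H1) C1)
                                  (connect_trans (connect1 H1') C1')) => C.
    exact: below C.
  by apply/esym; apply: below C.
move=> {}v {}v' [d1 [d2 [H1 H2 N C1 C2]]] [d1' [d2' [H1' H2' _ C1' C2']]] Cvv.
apply/eqP; apply/negP => /negP Ne.
have [c Hc Ccv] := connect_first_arc Cvv Ne.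
have below_c : forall d d' w, eT v d -> eT v' d' -> connect eT d w -> connect eT d' w -> c = d.
  move=> d d' w Hd Hd' Cd Cd'; have Cw := connect_trans Ccv (connect_trans (connect1 Hd') Cd').
  apply/eqP; apply/negP => /negP Ncd.
  by move: (siblings_disjoint Hc Hd Ncd Cw); rewrite Cd.
by move: N; rewrite -(below_c _ _ _ H1 H1' C1 C1') -(below_c _ _ _ H2 H2' C2 C2') eqxx.
Qed.

Variables (X : finType) (lT : X -> VT).
Hypothesis leaf_labels : forall v, (outdeg eT v == 0) = (v \in codom lT).
Hypothesis lT_inj : injective lT.

Lemma leaf_no_descendant v y : v \in codom lT -> connect eT v y -> v = y.
Proof.
move=> Hv Hc; apply/eqP; apply/negP => /negP Ne.
have [c Hc' _] := connect_first_arc Hc Ne.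
by move: Hv (outdeg_gt0 Hc'); rewrite -leaf_labels => /eqP ->.
Qed.

(* Every vertex lies above some leaf: follow arcs to a vertex with the most ancestors. *)
Lemma leaf_below c : exists x, connect eT c (lT x).
Proof.
have [w Cw Hmax] := arg_maxnP (ancestors_count eT) (connect0 eT c).
have : w \in codom lT.
  rewrite -leaf_labels cards_eq0; apply/eqP/setP => w'; rewrite !inE; apply/negP => Hw'.
  have := Hmax w' (connect_trans Cw (connect1 Hw')).
  by rewrite /= leqNgt (ancestors_count_lt (connect1 Hw') (tree_acyclic Hw')).
by case/codomP => x Ex; exists x; rewrite -Ex.
Qed.

(* Below the two children of the root lie two distinct leaves. *)
Lemma two_distinct_leaves : 2 <= outdeg eT rho -> exists x1 : X, exists x2, x1 != x2.
Proof.
rewrite /outdeg => /card_gt1P [c1 [c2 [H1 H2 N]]]; rewrite !inE in H1 H2.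
have [x1 C1] := leaf_below c1; have [x2 C2] := leaf_below c2.
exists x1, x2; apply/eqP => Ex.
by move: (siblings_disjoint H1 H2 N C1); rewrite Ex C2.
Qed.

Lemma mrca_branches v x1 x2 :
  x1 != x2 -> is_mrca eT v (lT x1) (lT x2) -> branches_to v (lT x1) (lT x2).
Proof.
move=> Nx /and3P [C1 C2 /forallP Hall].
have Nv : forall x x', x != x' -> connect eT v (lT x') -> v != lT x.
  move=> x x' Nxx Cx'; apply: contra Nxx => /eqP Ev.
  by rewrite Ev in Cx'; rewrite (lT_inj (leaf_no_descendant (codom_f lT x) Cx')).
have [c1 H1 D1] := connect_first_arc C1 (Nv _ _ Nx C2).
have [c2 H2 D2] := connect_first_arc C2 (Nv _ _ (contra_neq esym Nx) C1).
exists c1, c2; split => //; apply/eqP => Ec.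
have := Hall c1; rewrite D1 Ec D2 /= => Cc.
by move: (tree_acyclic H2); rewrite Cc.
Qed.

End RootedTree.

Lemma card_le_coding (T C : finType) (S : {set T}) (Cs : {set C}) (code : T -> C -> bool) :
  (forall v, v \in S -> exists c, code v c) ->
  (forall v v' c, code v c -> code v' c -> v = v') ->
  (forall v c, code v c -> c \in Cs) -> #|S| <= #|Cs|.
Proof.
move=> Hex Huniq Hrange; pose f v := [pick c | code v c].
have f_code v : v \in S -> exists2 c, f v = Some c & code v c.
  move=> /Hex [c Hc]; rewrite /f; case: pickP => [c' Hc'|/(_ c)]; last by rewrite Hc.
  by exists c'.
have f_inj : {in S &, injective f}.
  move=> v v' /f_code [c Ec Hc] /f_code [c' Ec' Hc']; rewrite Ec Ec' => -[Ecc].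
  by apply: Huniq Hc _; rewrite Ecc.
rewrite -(card_in_imset f_inj) -(card_imset Cs Some_inj); apply: subset_leq_card.
by apply/subsetP => _ /imsetP [v /f_code [c -> Hc] ->]; rewrite imset_f ?(Hrange _ _ Hc).
Qed.

(* The arithmetic behind the constant 2/3 of part (i). *)
Lemma pairs_bound h : 2 * ('C(h, 2) + h * h) <= 3 * h ^ 2.
Proof.
rewrite mulnDr bin2 mul2n halfK -mulnn.
have : h * h.-1 - odd (h * h.-1) <= h * h.
  exact: leq_trans (leq_subr _ _) (leq_mul (leqnn h) (leq_pred h)).
move/leq_add => /(_ _ _ (leqnn (2 * (h * h)))) /leq_trans; apply.
by rewrite -[X in X + _]mul1n -mulnDl.
Qed.

Section LowerBound.
Variables (X VT VN Gn : finType) (eT : rel VT) (lT : X -> VT) (rho : VT).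
Hypothesis tree : rooted_tree eT rho.
Hypothesis leaf_labels : forall v, (outdeg eT v == 0) = (v \in codom lT).
Hypothesis lT_inj : injective lT.

(* A network N whose arcs A' subdivide T: phi embeds the vertices of T and
   sub u w lists the internal vertices of the path replacing the arc (u, w). *)
Variables (eN : rel VN) (lN : X -> VN).
Variables (A' : {set VN * VN}) (phi : VT -> VN) (sub : VT -> VT -> seq VN).
Hypothesis phi_inj : injective phi.
Hypothesis phi_leaf : forall x, phi (lT x) = lN x.
Hypothesis sub_not_image : forall u w z, eT u w -> z \in sub u w -> z \notin codom phi.
Hypothesis sub_disjoint : forall u w u' w', eT u w -> eT u' w' -> (u, w) != (u', w') ->
  forall z, z \in sub u w -> z \notin sub u' w'.
Hypothesis A'_cover : forall a, a \in A' ->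
  exists u w, eT u w /\ a \in path_arcs (phi u) (sub u w) (phi w).

Definition home (z : VN) (w : VT) : bool :=
  (z == phi w) || [exists u, eT u w && (z \in sub u w)].

Lemma home_phi w : home (phi w) w.
Proof. by rewrite /home eqxx. Qed.

Lemma home_unique z w w' : home z w -> home z w' -> w = w'.
Proof.
have Nimg : forall u w, eT u w -> z \in sub u w -> forall w', z != phi w'.
  by move=> u w1 Hu Hz w1'; apply: contraNneq (sub_not_image Hu Hz) => ->; apply: codom_f.
case/orP => [/eqP Ez | /existsP [u /andP [Hu Hz]]] /orP
  [/eqP Ez' | /existsP [u' /andP [Hu' Hz']]].
- by apply: phi_inj; rewrite -Ez -Ez'.
- by move: (Nimg _ _ Hu' Hz' w); rewrite Ez eqxx.
- by move: (Nimg _ _ Hu Hz w'); rewrite Ez' eqxx.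
- case: (eqVneq (u, w) (u', w')) => [[_ ->] // | Ne].
  by move: (sub_disjoint Hu Hu' Ne Hz); rewrite Hz'.
Qed.

Lemma A'_arc_home a : a \in A' ->
  exists u w, [/\ eT u w, (a.1 == phi u) || home a.1 w & home a.2 w].
Proof.
case: a => a1 a2 /A'_cover [u [w [Huw]]] /mem_zip_pair [H1 H2].
have Hsub : forall z, z \in sub u w -> home z w.
  by move=> z Hz; apply/orP; right; apply/existsP; exists u; rewrite Huw.
exists u, w; split => //=.
  by move: H1; rewrite in_cons => /orP [-> // | /Hsub ->]; rewrite orbT.
by move: H2; rewrite mem_rcons in_cons => /orP [/eqP -> | /Hsub //]; apply: home_phi.
Qed.

(* The region of c: the image in N of the subtree of T rooted at c. *)
Definition region (c : VT) (z : VN) : bool := [exists w, home z w && connect eT c w].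

Lemma regionP c z w : home z w -> region c z = connect eT c w.
Proof.
move=> Hw; apply/existsP/idP => [[w' /andP [Hw' C]] | C]; last by exists w; rewrite Hw.
by rewrite (home_unique Hw Hw').
Qed.

Lemma region_leaf c x : connect eT c (lT x) -> region c (lN x).
Proof. by rewrite -(regionP c (home_phi (lT x))) phi_leaf. Qed.

Lemma region_A'_closed c a : a \in A' -> region c a.1 -> region c a.2.
Proof.
move=> /A'_arc_home [u [w [Huw H1 H2]]]; rewrite (regionP c H2).
case/orP: H1 => [/eqP E1 | H1]; last by rewrite (regionP c H1).
by rewrite E1 (regionP c (home_phi u)) => Cu; apply: connect_trans Cu (connect1 Huw).
Qed.

Lemma region_A'_enter v c a : a \in A' -> eT v c ->
  region c a.2 -> ~~ region c a.1 -> a.1 = phi v.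
Proof.
move=> /A'_arc_home [u [w [Huw H1 H2]]] Hvc; rewrite (regionP c H2) => Cw.
case/orP: H1 => [/eqP E1 | H1]; last by rewrite (regionP c H1) Cw.
rewrite E1 (regionP c (home_phi u)) => NCu.
case: (eqVneq c w) => [Ecw | Ncw]; last by rewrite (connect_parent tree Cw Ncw Huw) in NCu.
by rewrite -Ecw in Huw; rewrite (parent_unique tree Huw Hvc).
Qed.

Lemma regions_disjoint v c1 c2 z :
  eT v c1 -> eT v c2 -> c1 != c2 -> region c1 z -> ~~ region c2 z.
Proof.
move=> H1 H2 N /existsP [w /andP [Hw C1]]; rewrite (regionP c2 Hw).
exact: (siblings_disjoint tree H1 H2 N C1).
Qed.

Definition net_branches (v : VT) (z1 z2 : VN) : bool :=
  [exists d1, exists d2,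
     [&& eT v d1, eT v d2, d1 != d2, region d1 z1 & region d2 z2]].

Lemma net_branches_unique v v' z1 z2 :
  net_branches v z1 z2 -> net_branches v' z1 z2 -> v = v'.
Proof.
have to_tree : forall u, net_branches u z1 z2 ->
    exists w1 w2, [/\ home z1 w1, home z2 w2 & branches_to eT u w1 w2].
  move=> u /existsP [d1 /existsP [d2 /and5P [H1 H2 N /existsP [w1 /andP [Hw1 C1]]
                                                  /existsP [w2 /andP [Hw2 C2]]]]].
  by exists w1, w2; split => //; exists d1, d2.
move=> /to_tree [w1 [w2 [Hw1 Hw2 B]]] /to_tree [w1' [w2' [Hw1' Hw2' B']]].
rewrite -(home_unique Hw1 Hw1') -(home_unique Hw2 Hw2') in B'.
exact: (branches_to_unique tree B B').
Qed.

Definition added : {set VN * VN} := [set a : VN * VN | eN a.1 a.2 & a \notin A'].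

Lemma added_leaving c a b : eN a b -> region c a -> ~~ region c b -> (a, b) \in added.
Proof.
move=> Eab Ra NRb; rewrite inE Eab /=; apply: contra NRb => HA.
exact: region_A'_closed HA Ra.
Qed.

Lemma added_entering v c a b : eT v c -> eN a b -> a != phi v ->
  region c b -> ~~ region c a -> (a, b) \in added.
Proof.
move=> Hc Eab Na Rb NRa; rewrite inE Eab /=; apply: contra Na => HA.
by apply/eqP; exact: region_A'_enter HA Hc Rb NRa.
Qed.


Lemma added_arc_into_region v c (S : {set VN}) r z :
  eT v c -> phi v \notin S -> connect (induced eN S) r z -> ~~ region c r -> region c z ->
  exists a b, [/\ (a, b) \in added, ~~ region c a, region c b & connect (induced eN S) r a].
Proof.
move=> Hc NS Crz NRr Rz; have [a [b [Hab NRa Rb Cra]]] := connect_enter Crz NRr Rz.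
case/and3P: Hab => Eab Sa _; exists a, b; split => //.
by apply: (added_entering Hc Eab) => //; apply: contraNneq NS => <-.
Qed.

(* Codes of a vertex v: a 2-set of added arcs whose heads lie in the regions of
   two distinct children of v, or an ordered pair of added arcs, the tail of the
   first and the head of the second lying in such regions. *)
Definition code : Type := ({set VN * VN} + (VN * VN) * (VN * VN))%type.

Definition code_of (v : VT) (c : code) : bool :=
  match c with
  | inl B => [exists e1, exists e2, [&& e1 \in added, e2 \in added, e1 != e2,
                B == [set e1; e2] & net_branches v e1.2 e2.2]]
  | inr (e1, e2) => [&& e1 \in added, e2 \in added & net_branches v e1.1 e2.2]
  end.

Lemma net_branches_sym v z1 z2 : net_branches v z1 z2 -> net_branches v z2 z1.
Proof.
case/existsP => d1 /existsP [d2 /and5P [H1 H2 N R1 R2]].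
by apply/existsP; exists d2; apply/existsP; exists d1; rewrite H1 H2 eq_sym N R1 R2.
Qed.

Lemma code_of_unique v v' c : code_of v c -> code_of v' c -> v = v'.
Proof.
case: c => [B | [e1 e2]] /=; last first.
  by case/and3P => _ _ B1 /and3P [_ _]; apply: net_branches_unique.
case/existsP => e1 /existsP [e2 /and5P [_ _ _ /eqP EB B12]].
case/existsP => e1' /existsP [e2' /and5P [_ _ N' /eqP EB' B12']].
have := set21 e1' e2'; have := set22 e1' e2'; rewrite -EB' EB !inE.
case/orP => /eqP E2 /orP [] /eqP E1; rewrite E1 E2 ?eqxx // in N' B12'.
  exact: net_branches_unique B12 (net_branches_sym B12').
exact: net_branches_unique B12 B12'.
Qed.

Definition code_range : {set code} :=
  inl @: [set B : {set VN * VN} | B \subset added & #|B| == 2] :|: inr @: setX added added.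

Lemma code_of_range v c : code_of v c -> c \in code_range.
Proof.
rewrite inE; case: c => [B | [e1 e2]] /=.
  case/existsP => e1 /existsP [e2 /and5P [A1 A2 N /eqP EB _]].
  rewrite imset_f // inE EB cards2 N andbT.
  by apply/subsetP => e /set2P [] ->.
by case/and3P => A1 A2 _; rewrite orbC imset_f // in_setX A1 A2.
Qed.

Lemma card_code_range : #|code_range| <= 'C(#|added|, 2) + #|added| * #|added|.
Proof.
rewrite cardsU; apply: leq_trans (leq_subr _ _) _; apply: leq_add.
  by rewrite -(cards_draws added 2); apply: leq_imset_card.
by rewrite -cardsX; apply: leq_imset_card.
Qed.

Lemma code_root_in_region v c c' x (S : {set VN}) r :
  eT v c -> eT v c' -> c != c' -> phi v \notin S -> region c r ->
  connect eT c' (lT x) -> connect (induced eN S) r (lN x) -> exists e, code_of v (inr e).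
Proof.
move=> Hc Hc' N NS Rr Cx Crx.
have [a [b [Aab NRa Rb Cra]]] :=
  added_arc_into_region Hc' NS Crx (regions_disjoint Hc Hc' N Rr) (region_leaf Cx).
have code2 : forall e1, e1 \in added -> region c e1.1 -> code_of v (inr (e1, (a, b))).
  move=> e1 A1 R1; rewrite /= A1 Aab; apply/existsP; exists c; apply/existsP; exists c'.
  by rewrite Hc Hc' N R1 Rb.
case Ra: (region c a); first by exists ((a, b), (a, b)); apply: code2.
have out_r : ~~ (predC (region c)) r by rewrite /= Rr.
have out_a : (predC (region c)) a by rewrite /= Ra.
have [a' [b' [Hab' /negPn Ra' /= NRb' _]]] := connect_enter Cra out_r out_a.
exists ((a', b'), (a, b)); apply: code2 => //.
by case/and3P: Hab' => Eab' _ _; apply: added_leaving Eab' Ra' NRb'.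
Qed.

Lemma code_exists v c1 c2 x1 x2 (S : {set VN}) r :
  eT v c1 -> eT v c2 -> c1 != c2 -> connect eT c1 (lT x1) -> connect eT c2 (lT x2) ->
  phi v \notin S -> connect (induced eN S) r (lN x1) -> connect (induced eN S) r (lN x2) ->
  exists c, code_of v c.
Proof.
move=> H1 H2 N C1 C2 NS Cr1 Cr2.
case R1: (region c1 r).
  by have [e He] := code_root_in_region H1 H2 N NS R1 C2 Cr2; exists (inr e).
case R2: (region c2 r).
  have [e He] := code_root_in_region H2 H1 (contra_neq esym N) NS R2 C1 Cr1.
  by exists (inr e).
have [a1 [b1 [A1 _ Rb1 _]]] := added_arc_into_region H1 NS Cr1 (negbT R1) (region_leaf C1).
have [a2 [b2 [A2 _ Rb2 _]]] := added_arc_into_region H2 NS Cr2 (negbT R2) (region_leaf C2).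
have N12 : (a1, b1) != (a2, b2).
  by apply/eqP => -[_ Eb]; move: (regions_disjoint H1 H2 N Rb1); rewrite Eb Rb2.
exists (inl [set (a1, b1); (a2, b2)]); apply/existsP; exists (a1, b1); apply/existsP.
exists (a2, b2); rewrite A1 A2 N12 eqxx /=; apply/existsP; exists c1; apply/existsP.
by exists c2; rewrite H1 H2 N Rb1 Rb2.
Qed.

Variables (G : X -> {set Gn}) (k : nat).

Lemma bad_vertex_code v F :
  gene_labelling eN lN G k F -> k < n_of eT lT G v -> exists c, code_of v c.
Proof.
case=> Flab Fcard Froot Hn.
have [g] : exists2 g, g \in [set g : Gn | [exists x1, exists x2,
       [&& x1 != x2, g \in G x1, g \in G x2 & is_mrca eT v (lT x1) (lT x2)]]]
    & g \notin F (phi v).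
  apply/subsetPn; apply: contraTN Hn => Hs; rewrite -leqNgt.
  exact: leq_trans (subset_leq_card Hs) (Fcard _).
rewrite inE => /existsP [x1 /existsP [x2 /and4P [Nx G1 G2 Hm]]] NgF.
have [c1 [c2 [H1 H2 N C1 C2]]] := mrca_branches tree leaf_labels lT_inj Nx Hm.
have [r _ [_ Reach]] := Froot g.
have NS : phi v \notin [set z | g \in F z] by rewrite inE.
apply: (code_exists H1 H2 N C1 C2 NS); apply: Reach; by rewrite inE Flab.
Qed.

Lemma card_bad_vertices F : gene_labelling eN lN G k F ->
  #|[set v : VT | k < n_of eT lT G v]| <= 'C(#|added|, 2) + #|added| * #|added|.
Proof.
move=> HF; apply: leq_trans card_code_range.
apply: (card_le_coding (code := code_of)).
- by move=> v; rewrite inE; apply: bad_vertex_code HF.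
- exact: code_of_unique.
- exact: code_of_range.
Qed.

End LowerBound.

Lemma lower_bound (X VT Gn : finType) (eT : rel VT) (lT : X -> VT)
    (G : X -> {set Gn}) k rho :
  rooted_tree eT rho -> (forall v, (outdeg eT v == 0) = (v \in codom lT)) -> injective lT ->
  forall h, ell_attainable eT lT G k h ->
  2 * #|[set v : VT | k < n_of eT lT G v]| <= 3 * h ^ 2.
Proof.
move=> tree leaves lT_inj h [VN [eN [lN [_ [A' [phi [sub HA]]] [F HF]]]]].
case: HA => [[phi_inj phi_leaf] _ Hpath Hdisj [Hcover <-]].
have sub_not_image u w z : eT u w -> z \in sub u w -> z \notin codom phi.
  by move=> /Hpath [_ _]; apply.
apply: leq_trans (pairs_bound _); rewrite leq_mul2l /=.
exact: (card_bad_vertices tree leaves lT_inj phi_inj phi_leaf sub_not_image Hdisj Hcover HF).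
Qed.

Lemma connect_induced (V : finType) (e : rel V) (S : {set V}) u w :
  connect (induced e S) u w -> connect e u w.
Proof. by apply: connect_sub => a b /and3P [Hab _ _]; apply: connect1. Qed.

Section UpperBound.
Variables (X VT : finType) (eT : rel VT) (lT : X -> VT) (rho : VT).
Hypothesis tree : rooted_tree eT rho.
Hypothesis leaf_labels : forall v, (outdeg eT v == 0) = (v \in codom lT).
Hypothesis lT_inj : injective lT.
Hypothesis root_outdeg : 2 <= outdeg eT rho.
Hypothesis internal_outdeg : forall v, v != rho -> 0 < outdeg eT v -> 2 <= outdeg eT v.
Variable m : nat.

Definition ext_vertex : finType := (VT + 'I_m)%type.

Definition ext_arc : rel ext_vertex := fun u w =>
  match u, w with
  | inl a, inl b => eT a b
  | inl a, inr _ => a == rho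
  | inr _, inl b => b \in codom lT
  | inr _, inr _ => false
  end.

Definition ext_leaf (x : X) : ext_vertex := inl (lT x).

Definition tree_arcs : {set ext_vertex * ext_vertex} :=
  [set a | if a is (inl u, inl w) then eT u w else false].

Definition ext_added : {set ext_vertex * ext_vertex} :=
  [set a | ext_arc a.1 a.2 & a \notin tree_arcs].

Lemma root_not_leaf : rho \notin codom lT.
Proof. by rewrite -leaf_labels -lt0n (leq_trans _ root_outdeg). Qed.

Lemma ext_no_arc_into_root u : ~~ ext_arc u (inl rho).
Proof. by case: u => [a|i] /=; [exact: (root_no_parent tree a) | exact: root_not_leaf]. Qed.

Lemma ext_outdeg_tree v : outdeg eT v <= outdeg ext_arc (inl v).
Proof.
rewrite /outdeg -(card_imset [set w | eT v w] (@inl_inj VT 'I_m)).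
apply: subset_leq_card.
by apply/subsetP => z /imsetP [w]; rewrite inE => Hw ->; rewrite inE.
Qed.

Lemma ext_arc_internal v w : v != rho -> ext_arc (inl v) w -> exists2 b, w = inl b & eT v b.
Proof. by case: w => [b|i] /= Nv; [exists b | rewrite (negbTE Nv)]. Qed.

Lemma ext_outdeg_new i : 2 <= outdeg ext_arc (inr i).
Proof.
have [x1 [x2 Nx]] := two_distinct_leaves tree leaf_labels root_outdeg.
apply/card_gt1P; exists (inl (lT x1)), (inl (lT x2)); rewrite !inE /= !codom_f.
by split => //; apply: contra Nx => /eqP [/lT_inj ->].
Qed.

(* A path of T lifts to the sub-network induced by any S containing its vertices;
   it suffices that S contains every non-leaf vertex of T and the endpoint. *)
Lemma ext_connect_induced (S : {set ext_vertex}) a b :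
  (forall u w, eT u w -> inl u \in S) -> inl b \in S ->
  connect eT a b -> connect (induced ext_arc S) (inl a) (inl b).
Proof.
move=> HS Sb /connectP [s Hs Eb]; rewrite {b}Eb in Sb *.
elim: s a Hs Sb => [|y s IH] a /=; first by rewrite connect0.
case/andP => Hy Hs Sl; apply: connect_trans (IH y Hs Sl); apply: connect1.
rewrite /induced /= Hy (HS a y Hy) /=.
by case: s {IH} Hs Sl => [|z s] //= /andP [Hz _] _; apply: HS Hz.
Qed.

Lemma ext_root_reach z : connect ext_arc (inl rho) z.
Proof.
case: z => [v|i]; last by apply: connect1; rewrite /= eqxx.
have [_ Hreach _] := tree.
apply: (@connect_induced _ _ setT).
by apply: ext_connect_induced => *; rewrite ?in_setT ?Hreach.
Qed.

(* A rank strictly increasing along arcs: twice the number of tree ancestors,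
   the new vertices sitting just below the root. *)
Lemma ext_acyclic : acyclic ext_arc.
Proof.
pose r (z : ext_vertex) : nat := if z is inl v then (ancestors_count eT v).*2 else (ancestors_count eT rho).*2.+1.
have [_ Hreach _] := tree.
apply: (rank_acyclic (r := r)) => [[a|i] [b|j]] //=.
- move=> Hab; rewrite ltn_double.
  exact: ancestors_count_lt (connect1 Hab) (tree_acyclic tree Hab).
- by move=> /eqP ->; rewrite ltnSn.
- move=> Hb; rewrite ltn_Sdouble; apply: ancestors_count_lt (Hreach b) _.
  apply/negP => Cbr; have Nb : b != rho by apply: contraTneq Hb => ->; apply: root_not_leaf.
  have [q _ Hq] := connect_last_arc Cbr Nb.
  by move: (root_no_parent tree q); rewrite Hq.
Qed.

Lemma ext_leaf_labels z : (outdeg ext_arc z == 0) = (z \in codom ext_leaf).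
Proof.
case: z => [v|i]; last first.
  rewrite (_ : inr i \in codom ext_leaf = false); last by apply/negP => /codomP [x].
  by apply/negbTE; rewrite -lt0n (leq_trans _ (ext_outdeg_new i)).
have -> : (inl v \in codom ext_leaf) = (v \in codom lT).
  by apply/codomP/codomP => [[x [Ex]] | [x Ex]]; exists x; rewrite ?Ex.
case: (eqVneq v rho) => [->|Nv].
  rewrite (negbTE root_not_leaf); apply/negbTE; rewrite -lt0n.
  exact: leq_trans _ (leq_trans root_outdeg (ext_outdeg_tree rho)).
rewrite -leaf_labels; apply/idP/idP => /eqP E; first by have := ext_outdeg_tree v; rewrite E leqn0.
rewrite /outdeg cards_eq0; apply/eqP/setP => w; rewrite inE in_set0; apply/negP => Hw.
have [b _ Hb] := ext_arc_internal Nv Hw.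
by move: (outdeg_gt0 Hb); rewrite E.
Qed.

Lemma ext_phylo_network : phylo_network ext_arc ext_leaf.
Proof.
split.
- exists (inl rho); last exact: leq_trans root_outdeg (ext_outdeg_tree rho).
  by split; [apply/indeg_eq0; exact: ext_no_arc_into_root | exact: ext_root_reach].
- exact: ext_acyclic.
- (* in fact no vertex of the network has outdegree 1 *)
  case=> [v|i] H1; last by have := ext_outdeg_new i; rewrite H1.
  case: (eqVneq v rho) => [E|Nv].
    by have := leq_trans root_outdeg (ext_outdeg_tree rho); rewrite -E H1.
  have : 0 < outdeg ext_arc (inl v) by rewrite H1.
  rewrite card_gt0 => /set0Pn [w]; rewrite inE => /(ext_arc_internal Nv) [b _ Hb].
  by have := leq_trans (internal_outdeg Nv (outdeg_gt0 Hb)) (ext_outdeg_tree v); rewrite H1.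
- by split; [move=> x y [/lT_inj] | exact: ext_leaf_labels].
Qed.

Lemma ext_obtained : obtained_by_adding eT lT ext_arc ext_leaf #|ext_added|.
Proof.
exists tree_arcs, inl, (fun _ _ => [::]); split => //.
- by split; first exact: inl_inj.
- by move=> [[a|i] [b|j]]; rewrite inE.
- by move=> u w Huw; split => //=; rewrite /path_arcs /= andbT inE.
- split => // -[[a|i] [b|j]]; rewrite inE // => Hab; exists a, b.
  by rewrite /path_arcs /= inE.
Qed.

(* The added arcs go from the root to a new vertex, or from a new vertex to a leaf. *)
Lemma card_ext_added : #|ext_added| <= m * (#|X| + 1).
Proof.
pose arc_of p : ext_vertex * ext_vertex :=
  if p is (i, Some x) then (inr i, inl (lT x)) else (inl rho, inr p.1).
apply: (@leq_trans #|arc_of @: [set: 'I_m * option X]|).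
  apply: subset_leq_card; apply/subsetP => [[[a|i] [b|j]]]; rewrite inE /= => // /andP [He Hn].
  - by rewrite inE He in Hn.
  - by apply/imsetP; exists (j, None); rewrite ?in_setT // (eqP He).
  - by case/codomP: He => x ->; apply/imsetP; exists (i, Some x); rewrite ?in_setT.
apply: leq_trans (leq_imset_card _ _) _.
by rewrite cardsT card_prod card_ord card_option addn1.
Qed.


(* Genes are cut into blocks of k consecutive ones (in enumeration order):
   block 0 sits on the vertices of T and block j+1 on the j-th new vertex. *)
Variables (Gn : finType) (G : X -> {set Gn}) (k : nat).
Hypothesis k_gt0 : 0 < k.
Hypothesis G_small : forall x, #|G x| <= k.
Hypothesis few_blocks : #|Gn| <= k * m.+1.

Definition block (g : Gn) : nat := enum_rank g %/ k.

Definition ext_genes (z : ext_vertex) : {set Gn} :=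
  match z with
  | inl v => if [pick x | lT x == v] is Some x then G x else [set g | block g == 0]
  | inr i => [set g | block g == i.+1]
  end.

Lemma card_block j : #|[set g | block g == j]| <= k.
Proof.
pose pos (g : Gn) : 'I_k := Ordinal (ltn_pmod (enum_rank g) k_gt0).
rewrite -(card_in_imset (f := pos)); first by apply: leq_trans (max_card _) _; rewrite card_ord.
move=> g g'; rewrite !inE => /eqP Hg /eqP Hg' [E]; apply/enum_rank_inj/val_inj => /=.
rewrite /block in Hg Hg'.
by rewrite (divn_eq (enum_rank g) k) (divn_eq (enum_rank g') k) Hg Hg' E.
Qed.

Lemma block_le g : block g <= m.
Proof.
rewrite -ltnS ltn_divLR // mulnC; exact: leq_trans (ltn_ord (enum_rank g)) few_blocks.
Qed.

Lemma ext_genes_leaf x : ext_genes (ext_leaf x) = G x.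
Proof.
rewrite /= ; case: pickP => [y /eqP /lT_inj -> // | /(_ x)]; by rewrite eqxx.
Qed.

Lemma ext_genes_internal v : v \notin codom lT -> ext_genes (inl v) = [set g | block g == 0].
Proof.
move=> Nv /=; case: pickP => [y /eqP Ey | //].
by rewrite -Ey codom_f in Nv.
Qed.

(* A gene of block 0 is rooted at the root of T: it is carried by all non-leaf
   vertices of T. *)
Lemma block0_rooted g : block g = 0 -> rooted_on ext_arc [set z | g \in ext_genes z].
Proof.
have [_ Hreach _] := tree.
move=> Hb; exists (inl rho).
  by rewrite inE ext_genes_internal ?root_not_leaf // inE Hb.
split.
  by apply/indeg_eq0 => u; apply: contraNN (ext_no_arc_into_root u) => /and3P [].
case=> [b|i]; rewrite inE => Hgb; last by move: Hgb; rewrite /= inE Hb.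
apply: ext_connect_induced (Hreach b); last by rewrite inE.
move=> u w Huw; rewrite inE ext_genes_internal ?inE ?Hb //.
by rewrite -leaf_labels -lt0n (outdeg_gt0 Huw).
Qed.

(* A gene of block j+1 is rooted at the j-th new vertex, a parent of all leaves. *)
Lemma block_rooted g j : block g = j.+1 -> rooted_on ext_arc [set z | g \in ext_genes z].
Proof.
move=> Hb; have Hj : j < m by rewrite -Hb block_le.
have Sint v : v \notin codom lT -> g \notin ext_genes (inl v).
  by move=> Nv; rewrite ext_genes_internal // inE Hb.
exists (inr (Ordinal Hj)); first by rewrite inE /= inE Hb.
split.
  apply/indeg_eq0 => -[a|i]; rewrite /induced //= inE.
  by case: (eqVneq a rho) => [->|] //=; move: (Sint _ root_not_leaf) => /= /negbTE ->.
case=> [b|i]; rewrite inE => Hgb.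
  have Lb : b \in codom lT by apply: contraLR Hgb => /Sint.
  by apply: connect1; rewrite /induced /= Lb !inE /= Hb eqxx.
move: Hgb; rewrite /ext_genes inE Hb eqSS => /eqP E.
by rewrite (_ : i = Ordinal Hj) ?connect0 //; apply: val_inj.
Qed.

Lemma ext_gene_labelling : gene_labelling ext_arc ext_leaf G k ext_genes.
Proof.
split; first exact: ext_genes_leaf.
- case=> [v|i] /=; last exact: card_block.
  by case: pickP => [x _|_]; [exact: G_small | exact: card_block].
- by move=> g; case Hb: (block g) => [|j]; [exact: block0_rooted | exact: (block_rooted Hb)].
Qed.

End UpperBound.

Lemma ceil_div_blocks n k : 0 < k -> n <= k * (ceil_div (n - k) k).+1.
Proof.
move=> k_gt0; rewrite mulnS mulnC -leq_subLR /ceil_div.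
set q := (n - k + k.-1) %/ k.
have Hr : (n - k + k.-1) %% k <= k.-1 by rewrite -ltnS prednK // ltn_pmod.
have : n - k + k.-1 <= q * k + k.-1 by rewrite {1}(divn_eq (n - k + k.-1) k) leq_add2l.
by rewrite leq_add2r.
Qed.

Lemma phylo_tree_structure (X VT : finType) (eT : rel VT) (lT : X -> VT) :
  phylo_tree eT lT -> exists rho, [/\ rooted_tree eT rho,
    forall v, (outdeg eT v == 0) = (v \in codom lT), injective lT,
    2 <= outdeg eT rho &
    forall v, v != rho -> 0 < outdeg eT v -> 2 <= outdeg eT v].
Proof.
case=> rho [[root0 reach] indeg1 root_deg internal_deg [lT_inj leaves]].
exists rho; split => //; first by rewrite root0 in root_deg.
by move=> v Nv /(internal_deg v Nv); rewrite indeg1.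
Qed.

Theorem theorem1 (X Gn VT : finType) (eT : rel VT) (lT : X -> VT)
    (G : X -> {set Gn}) (k : nat) :
  phylo_tree eT lT -> 0 < k -> (forall x, #|G x| <= k) ->
  (* (i): every attainable h, in particular ell(T,G,k), satisfies
     h >= sqrt(2/3 * #{v | n(v) > k}), i.e. 2 * #{...} <= 3 * h^2 *)
  (forall h, ell_attainable eT lT G k h ->
     2 * #|[set v : VT | k < n_of eT lT G v]| <= 3 * h ^ 2) /\
  (* (ii): some h <= ceil((|Genes| - k)/k) * (|X| + 1) is attainable *)
  (exists2 h, ell_attainable eT lT G k h &
     h <= ceil_div (#|Gn| - k) k * (#|X| + 1)).
Proof.
move=> /phylo_tree_structure [rho [tree leaves lT_inj root_out internal_out]] k_gt0 G_small.
split; first exact: lower_bound tree leaves lT_inj.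
set m := ceil_div (#|Gn| - k) k.
exists #|ext_added eT lT rho m|; last exact: card_ext_added.
exists (ext_vertex VT m), (ext_arc eT lT rho (m := m)), (ext_leaf lT m); split.
- exact: (ext_phylo_network tree leaves lT_inj root_out internal_out).
- exact: ext_obtained.
- exists (ext_genes lT G k); apply: ext_gene_labelling => //.
  exact: ceil_div_blocks.
Qed.
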